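(* Let $V$ be a reflexive Banach space, $X$ a Banach space, $\gamma\in\mathcal{L}(V,X)$ with $c_\gamma:=\|\gamma\|_{\mathcal{L}(V,X)}$ and adjoint $\gamma^*\colon X^*\to V^*$. Let $A\colon V\to V^*$, $J\colon X\times X\to\mathbb{R}$ and $f\in V^*$ satisfy: (A1) $A$ is linear and bounded; (A2) $\langle Au,v\rangle_{V^*\times V}=\langle Av,u\rangle_{V^*\times V}$ for all $u,v\in V$; (A3) there is $m_A>0$ with $\langle Au,u\rangle_{V^*\times V}\ge m_A\|u\|_V^2$ for all $u\in V$; (J1) $J$ is locally Lipschitz continuous with respect to its second variable; (J2) there exist $c_0,c_1,c_2\ge 0$ with $\|\partial_2 J(w,v)\|_{X^*}\le c_0+c_1\|v\|_X+c_2\|w\|_X$ for all $w,v\in X$; (J3) there exist $m_\alpha,m_L\ge0$ such that $J_2^0(w_1,v_1;v_2-v_1)+J_2^0(w_2,v_2;v_1-v_2)\le m_\alpha\|v_1-v_2\|_X^2+m_L\|w_1-w_2\|_X\|v_1-v_2\|_X$ for all $w_1,w_2,v_1,v_2\in X$; (S) $m_A>(m_\alpha+m_L)c_\gamma^2$. Define $\mathcal{L}\colon V\times V\to\mathbb{R}$ by $\mathcal{L}(w,v)=\tfrac12\langle Av,v\rangle_{V^*\times V}-\langle f,v\rangle_{V^*\times V}+J(\gamma w,\gamma v)$. Then: (i) $\mathcal{L}(w,\cdot)$ is locally Lipschitz continuous for all $w\in V$; (ii) $\partial_2\mathcal{L}(w,v)\subseteq Av-f+\gamma^*\partial_2J(\gamma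 w,\gamma v)$ for all $w,v\in V$; (iii) $\mathcal{L}(w,\cdot)$ is strictly convex for all $w\in V$.
   Context: For a locally Lipschitz function $g$ on a Banach space $Y$, the generalized (Clarke) directional derivative at $x$ in direction $v$ is $g^0(x;v)=\limsup_{y\to x,\lambda\searrow0}\frac{g(y+\lambda v)-g(y)}{\lambda}$, and the Clarke subdifferential is $\partial g(x)=\{\xi\in Y^*:\langle\xi,v\rangle\le g^0(x;v)\ \forall v\in Y\}$. For a function of two variables, $\partial_2$ and $(\cdot)_2^0$ denote the Clarke subdifferential and generalized directional derivative with respect to the second variable. $\|\partial_2J(w,v)\|_{X^*}$ denotes $\sup\{\|\xi\|_{X^*}:\xi\in\partial_2J(w,v)\}$. *)

From HB Require Import structures.
From mathcomp Require Import all_boot all_order all_algebra.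
From mathcomp Require Import all_classical all_reals all_analysis.
Set Implicit Arguments. Unset Strict Implicit. Unset Printing Implicit Defensive.
Import Order.TTheory GRing.Theory Num.Theory.
Import numFieldNormedType.Exports.
Local Open Scope classical_set_scope.
Local Open Scope ring_scope.

Section Defs.
Context {R : realType}.

Definition is_linear (Y Z : normedModType R) (g : Y -> Z) :=
  forall (a : R) (x y : Y), g (a *: x + y) = a *: g x + g y.

Definition dual_elt (Y : normedModType R) (xi : Y -> R) :=
  (forall (a : R) (x y : Y), xi (a *: x + y) = a * xi x + xi y) /\ continuous xi.

Definition dual_norm (Y : normedModType R) (xi : Y -> R) : R :=
  sup [set `|xi v| | v in [set v : Y | `|v| <= 1]].

Definition op_norm (Y Z : normedModType R) (g : Y -> Z) : R :=
  sup [set `|g v| | v in [set v : Y | `|v| <= 1]].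

(* reflexivity: every bounded linear functional on Y^* is an evaluation
   functional xi |-> xi v, i.e. the canonical embedding Y -> Y^** is onto *)
Definition reflexive_space (Y : normedModType R) :=
  forall Phi : (Y -> R) -> R,
    (forall (a : R) (xi1 xi2 : Y -> R), dual_elt xi1 -> dual_elt xi2 ->
       Phi (fun y => a * xi1 y + xi2 y) = a * Phi xi1 + Phi xi2) ->
    (exists C : R, forall xi, dual_elt xi -> `|Phi xi| <= C * dual_norm xi) ->
    exists v : Y, forall xi, dual_elt xi -> Phi xi = xi v.

Definition loc_lipschitz (Y : normedModType R) (g : Y -> R) :=
  forall x : Y, exists2 r : R, 0 < r & exists L : R,
    forall y z : Y, `|y - x| < r -> `|z - x| < r -> `|g y - g z| <= L * `|y - z|.

(* Clarke generalized directional derivative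
   g^0(x;v) = limsup_{y -> x, lambda \searrow 0} (g(y + lambda v) - g y)/lambda
            = inf_{delta > 0} sup_{||y - x|| < delta, 0 < lambda < delta} ... *)
Definition clarke_dd (Y : normedModType R) (g : Y -> R) (x v : Y) : \bar R :=
  ereal_inf [set ereal_sup
     [set ((g (yl.1 + yl.2 *: v) - g yl.1) / yl.2)%:E
       | yl in [set yl : Y * R | `|yl.1 - x| < delta /\ 0 < yl.2 < delta]]
     | delta in [set d : R | 0 < d]].

Definition clarke_subdiff (Y : normedModType R) (g : Y -> R) (x : Y) : set (Y -> R) :=
  [set xi | dual_elt xi /\ forall v : Y, ((xi v)%:E <= clarke_dd g x v)%E].

Definition strictly_convex (Y : normedModType R) (g : Y -> R) :=
  forall (u v : Y) (t : R), u <> v -> 0 < t < 1 ->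
    g (t *: u + (1 - t) *: v) < t * g u + (1 - t) * g v.

Definition Lag_fun (V X : normedModType R) (A : V -> V -> R) (f : V -> R)
  (gamma : V -> X) (J : X -> X -> R) (w v : V) : R :=
  2^-1 * A v v - f v + J (gamma w) (gamma v).

End Defs.

(* (i) L(w, .) is a locally Lipschitz quadratic plus J(gamma w, .) composed with the
   bounded linear map gamma.
   (ii) The sum and chain rules for Clarke derivatives give
   L_2^0(w, v; u) <= <A v - f, u> + J_2^0(gamma w, gamma v; gamma u), so xi - A v + f is a
   linear functional on V dominated by p o gamma, where p := J_2^0(gamma w, gamma v; .) is
   sublinear. Hahn-Banach factors it as eta o gamma with eta <= p; such an eta is bounded,
   hence lies in the subdifferential of J(gamma w, .) at gamma v.
   (iii) If strict convexity failed on a segment [v, u], the deviation of L(w, .) from its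
   chord along the segment would be continuous, zero at both ends and nonnegative somewhere
   inside, so it would have an interior maximum c preceded by a minimum a < c on [0, c].
   One-sided difference quotients at a and c bound J_2^0 there, in the directions
   +-(c - a) gamma (u - v), from below by two numbers summing to
   (c - a)^2 <A (u - v), u - v>; (J3) with w1 = w2 bounds the same sum by
   m_alpha (c - a)^2 |gamma (u - v)|^2, which (S) rules out. *)

From HB Require Import structures.
From mathcomp Require Import all_boot all_order all_algebra.
From mathcomp Require Import all_classical all_reals all_analysis.
From mathcomp Require Import ring lra.
Import Order.TTheory GRing.Theory Num.Theory.
Import numFieldNormedType.Exports.
Local Open Scope classical_set_scope.
Local Open Scope ring_scope.
Set Implicit Arguments.
Unset Strict Implicit.

(** * Bounded linear maps *)

Section BoundedLinear.
Context {R : realType}.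
Implicit Types Y Z : normedModType R.

(* [is_linear g] unfolds to [linear_for *:%R g], so [g] packs into a [{linear}] morphism. *)
Definition linear_of Y Z (g : Y -> Z) (hg : is_linear g) : {linear Y -> Z} :=
  HB.pack g (GRing.isLinear.Build R Y Z *:%R g hg).

Section IsLinear.
Variables (Y Z : normedModType R) (g : Y -> Z).
Hypothesis hg : is_linear g.

Lemma is_linear0 : g 0 = 0.
Proof. exact: linear0 (linear_of hg). Qed.

Lemma is_linearD x y : g (x + y) = g x + g y.
Proof. exact: (linearD (linear_of hg) x y). Qed.

Lemma is_linearZ a x : g (a *: x) = a *: g x.
Proof. exact: (linearZZ (linear_of hg) a x). Qed.

Lemma is_linearN x : g (- x) = - g x.
Proof. exact: (linearN (linear_of hg) x). Qed.

Lemma is_linearB x y : g (x - y) = g x - g y.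
Proof. exact: (linearB (linear_of hg) x y). Qed.

Lemma is_linear_bounded : continuous g ->
  exists2 B, 0 < B & forall v, `|g v| <= B * `|v|.
Proof.
move=> cg; have g0 : {for 0, continuous (linear_of hg)} := cg 0.
by have /linear_boundedP/pinfty_ex_gt0 := continuous_linear_bounded 0 g0.
Qed.

Lemma is_linear_dominated_continuous (L : R) :
  (forall v, `|g v| <= L * `|v|) -> continuous g.
Proof.
move=> gL; apply/(linear_bounded_continuous (linear_of hg))/linear_boundedP.
by near=> r => v; rewrite (le_trans (gL v)) // ler_wpM2r // ltW.
Unshelve. all: by end_near. Qed.

Lemma op_norm_ub : continuous g ->
  has_ubound [set `|g v| | v in [set v : Y | `|v| <= 1]].
Proof.
move=> cg; have [B B0 gB] := is_linear_bounded cg.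
exists B => _ [v /= v1 <-]; apply: (le_trans (gB v)).
by rewrite -[leRHS]mulr1 ler_wpM2l // ltW.
Qed.

Lemma op_norm_ge0 : continuous g -> 0 <= op_norm g.
Proof.
move=> cg; apply: (le_trans _ (ub_le_sup (op_norm_ub cg) _)); last first.
  by exists 0; rewrite /= ?normr0.
by rewrite is_linear0 normr0.
Qed.

Lemma op_norm_le : continuous g -> forall v, `|g v| <= op_norm g * `|v|.
Proof.
move=> cg v; have [->|v0] := eqVneq v 0; first by rewrite is_linear0 !normr0 mulr0.
have nv : 0 < `|v| by rewrite normr_gt0.
suff : `|g (`|v|^-1 *: v)| <= op_norm g.
  by rewrite is_linearZ normrZ normfV normr_id mulrC ler_pdivrMr.
apply: (ub_le_sup (op_norm_ub cg)); exists (`|v|^-1 *: v) => //=.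
by rewrite normrZ normfV normr_id mulVf // gt_eqF.
Qed.

End IsLinear.

Section DualElt.
Variables (Y : normedModType R) (xi : Y -> R).
Hypothesis hxi : dual_elt xi.

Lemma dual_elt_linear : is_linear (xi : Y -> R^o).
Proof. by case: hxi => h _ a x y; rewrite h. Qed.

Lemma dual_eltD x y : xi (x + y) = xi x + xi y.
Proof. exact: (is_linearD dual_elt_linear x y). Qed.

Lemma dual_eltZ a x : xi (a *: x) = a * xi x.
Proof. exact: (is_linearZ dual_elt_linear a x). Qed.

Lemma dual_eltB x y : xi (x - y) = xi x - xi y.
Proof. exact: (is_linearB dual_elt_linear x y). Qed.

Lemma dual_elt_bounded : exists2 B, 0 < B & forall v, `|xi v| <= B * `|v|.
Proof. exact: (is_linear_bounded dual_elt_linear hxi.2). Qed.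

Lemma dual_norm_le v : `|xi v| <= dual_norm xi * `|v|.
Proof. exact: (op_norm_le dual_elt_linear hxi.2 v). Qed.

End DualElt.

Lemma coercive_gt_op_norm Y Z (g : Y -> Z) (A : Y -> Y -> R) (m_A m : R) :
  is_linear g -> continuous g -> (forall u, m_A * `|u| ^+ 2 <= A u u) ->
  0 <= m -> m * op_norm g ^+ 2 < m_A ->
  forall u, u != 0 -> m * `|g u| ^+ 2 < A u u.
Proof.
move=> hg cg hA m0 gap u u0; apply: lt_le_trans (hA u).
have gu : `|g u| ^+ 2 <= (op_norm g * `|u|) ^+ 2.
  by rewrite ler_pXn2r ?nnegrE ?mulr_ge0 ?op_norm_ge0 // op_norm_le.
apply: le_lt_trans (ler_wpM2l m0 gu) _.
by rewrite exprMn mulrA ltr_pM2r // exprn_gt0 // normr_gt0.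
Qed.

End BoundedLinear.

(** * The Clarke directional derivative *)

Section ClarkeDerivative.
Context {R : realType} {Y : normedModType R}.
Implicit Types (g : Y -> R) (x y v : Y) (B : R).

Definition diff_quot g y v (l : R) := (g (y + l *: v) - g y) / l.

Lemma clarke_dd_le g x v B :
  (forall e, 0 < e -> exists2 d, 0 < d & forall y l,
     `|y - x| < d -> 0 < l < d -> diff_quot g y v l <= B + e) ->
  (clarke_dd g x v <= B%:E)%E.
Proof.
move=> H; apply/lee_addgt0Pr => e e0; have [d d0 Hd] := H e e0.
apply: (le_trans (ereal_inf_lbound _)); first by exists d.
apply: ge_ereal_sup => _ [[y l] /= [yx ld] <-].
by rewrite lee_fin; exact: Hd.
Qed.

Lemma clarke_dd_ge g x v B :
  (forall e d, 0 < e -> 0 < d -> exists y l,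
     [/\ `|y - x| < d, 0 < l < d & B - e <= diff_quot g y v l]) ->
  (B%:E <= clarke_dd g x v)%E.
Proof.
move=> H; apply/lee_subgt0Pr => e e0; apply: le_ereal_inf_tmp => _ [d d0 <-].
have [y [l [yx ld Bq]]] := H e d e0 d0.
apply: le_ereal_sup_tmp; exists (diff_quot g y v l)%:E; first by exists (y, l).
by rewrite -EFinB lee_fin.
Qed.

Lemma clarke_dd_lt g x v B : (clarke_dd g x v <= B%:E)%E -> forall e, 0 < e ->
  exists2 d, 0 < d & forall y l,
    `|y - x| < d -> 0 < l < d -> diff_quot g y v l < B + e.
Proof.
move=> H e e0.
have : (clarke_dd g x v < (B + e)%:E)%E by rewrite (le_lt_trans H) // lte_fin ltrDl.
case/ereal_inf_lt => _ [d d0 <-] Hs; exists d => // y l yx ld.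
by rewrite -lte_fin (le_lt_trans _ Hs) //; apply: ereal_sup_ubound; exists (y, l).
Qed.

Lemma clarke_dd_ge_right g x v B K delta : 0 < delta ->
  (forall l, 0 < l < delta -> B - K * l <= diff_quot g x v l) ->
  (B%:E <= clarke_dd g x v)%E.
Proof.
move=> delta0 H; apply: clarke_dd_ge => e d e0 d0.
have K1 : 0 < `|K| + 1 by rewrite ltr_wpDl.
pose l := Num.min (Num.min delta d) (e / (`|K| + 1)) / 2.
have l0 : 0 < l by rewrite divr_gt0 // !lt_min delta0 d0 divr_gt0.
have lm : l < Num.min (Num.min delta d) (e / (`|K| + 1)).
  by rewrite ltr_pdivrMr // ltr_pMr ?ltr1n // !lt_min delta0 d0 divr_gt0.
move: lm; rewrite !lt_min => /andP[/andP[ldelta ld] le].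
exists x, l; split; rewrite ?subrr ?normr0 ?l0 //.
apply: le_trans (H l _); last by rewrite l0.
have : K * l <= `|K| * l by apply: ler_wpM2r; [exact: ltW | exact: ler_norm].
have : `|K| * l <= e by move: le; rewrite ltr_pdivlMr // => /ltW; nra.
lra.
Qed.

Lemma clarke_dd_ge_left g x v B K delta : 0 < delta ->
  (forall l, 0 < l < delta -> B - K * l <= (g x - g (x - l *: v)) / l) ->
  (B%:E <= clarke_dd g x v)%E.
Proof.
move=> delta0 H; apply: clarke_dd_ge => e d e0 d0.
have K1 : 0 < `|K| + 1 by rewrite ltr_wpDl.
have v1 : 0 < `|v| + 1 by rewrite ltr_wpDl.
pose m := Num.min (Num.min delta d) (Num.min (e / (`|K| + 1)) (d / (`|v| + 1))).
have m0 : 0 < m by rewrite !lt_min delta0 d0 !divr_gt0.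
pose l := m / 2.
have l0 : 0 < l by rewrite divr_gt0.
have : l < m by rewrite ltr_pdivrMr // ltr_pMr ?ltr1n.
rewrite !lt_min => /andP[/andP[ldelta ld] /andP[le lv]].
exists (x - l *: v), l; split; rewrite ?l0 //.
- rewrite addrAC subrr add0r normrN normrZ gtr0_norm //.
  by move: lv; rewrite ltr_pdivlMr // => lv; nra.
- rewrite /diff_quot subrK; apply: le_trans (H l _); last by rewrite l0.
  have : K * l <= `|K| * l by apply: ler_wpM2r; [exact: ltW | exact: ler_norm].
  have : `|K| * l <= e by move: le; rewrite ltr_pdivlMr // => /ltW; nra.
  lra.
Qed.

End ClarkeDerivative.

Section ClarkeSublinear.
Context {R : realType} {Y : normedModType R}.
Implicit Types (g : Y -> R) (x y v : Y).

Lemma loc_lipschitz_diff_quot g x : loc_lipschitz g ->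
  exists2 L, 0 <= L & forall v, exists2 d, 0 < d & forall y l,
    `|y - x| < d -> 0 < l < d -> `|diff_quot g y v l| <= L * `|v|.
Proof.
move=> /(_ x) [r r0 [L HL]]; exists `|L| => // v.
have v1 : 0 < `|v| + 1 by rewrite ltr_wpDl.
exists (r / (2 * (`|v| + 1))); first by rewrite divr_gt0 // mulr_gt0.
move=> y l + /andP[l0]; rewrite !ltr_pdivlMr ?mulr_gt0 // => yx ld.
have nv := normr_ge0 v; have nyx := normr_ge0 (y - x).
have yr : `|y - x| < r by nra.
have ylr : `|y + l *: v - x| < r.
  by rewrite addrAC (le_lt_trans (ler_normD _ _)) // normrZ gtr0_norm //; nra.
have := HL _ _ ylr yr; rewrite addrAC subrr add0r normrZ gtr0_norm // => H.
rewrite /diff_quot normrM normfV (gtr0_norm l0) ler_pdivrMr // (le_trans H) //.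
rewrite -mulrA [`|v| * l]mulrC; apply: ler_wpM2r; [nra | exact: ler_norm].
Qed.

Lemma clarke_dd_fin g x : loc_lipschitz g ->
  exists2 L, 0 <= L & forall v,
    exists2 r, clarke_dd g x v = r%:E & `|r| <= L * `|v|.
Proof.
move=> /(loc_lipschitz_diff_quot x) [L L0 HL]; exists L => // v.
have [d d0 Hd] := HL v.
have lb : ((- (L * `|v|))%:E <= clarke_dd g x v)%E.
  apply: (clarke_dd_ge_right (K := 0) d0) => l ld; rewrite mul0r subr0.
  by have := Hd x l; rewrite subrr normr0 => /(_ d0 ld); rewrite ler_norml => /andP[].
have ub : (clarke_dd g x v <= (L * `|v|)%:E)%E.
  apply: clarke_dd_le => e e0; exists d => // y l yx ld.
  have := Hd y l yx ld; rewrite ler_norml => /andP[_ H].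
  by rewrite (le_trans H) // lerDl ltW.
move: lb ub; case: (clarke_dd g x v) => [r| |] //= lb ub.
by exists r => //; rewrite ler_norml -!lee_fin lb ub.
Qed.

Lemma clarke_dd_subadd g x v1 v2 (B1 B2 : R) :
  (clarke_dd g x v1 <= B1%:E)%E -> (clarke_dd g x v2 <= B2%:E)%E ->
  (clarke_dd g x (v1 + v2)%R <= (B1 + B2)%:E)%E.
Proof.
move=> H1 H2; apply: clarke_dd_le => e e0.
have e2 : 0 < e / 2 by rewrite divr_gt0.
have [d1 d10 Hd1] := clarke_dd_lt H1 e2.
have [d2 d20 Hd2] := clarke_dd_lt H2 e2.
have v1p : 0 < `|v1| + 1 by rewrite ltr_wpDl.
pose d := Num.min d1 (d2 / (`|v1| + 1)).
have d0 : 0 < d by rewrite lt_min d10 divr_gt0.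
have dd1 : d <= d1 by rewrite ge_min lexx.
have dd2 : d * (`|v1| + 1) <= d2 by rewrite -ler_pdivlMr // ge_min lexx orbT.
exists d => // y l yx /andP[l0 ld].
have -> : diff_quot g y (v1 + v2) l =
    diff_quot g (y + l *: v1) v2 l + diff_quot g y v1 l.
  by rewrite /diff_quot scalerDr addrA; field; rewrite gt_eqF.
have q1 := Hd1 y l (lt_le_trans yx dd1) (introT andP (conj l0 (lt_le_trans ld dd1))).
have q2 : diff_quot g (y + l *: v1) v2 l < B2 + e / 2.
  have nv1 : 0 <= `|v1| by [].
  apply: Hd2; last by rewrite l0 /=; nra.
  rewrite addrAC (le_lt_trans (ler_normD _ _)) // normrZ gtr0_norm //; nra.
have -> : B1 + B2 + e = (B2 + e / 2) + (B1 + e / 2) by field.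
exact/ltW/ltrD.
Qed.

Lemma clarke_dd_scale g x v t (B : R) : 0 < t ->
  (clarke_dd g x v <= B%:E)%E -> (clarke_dd g x (t *: v)%R <= (t * B)%:E)%E.
Proof.
move=> t0 H; apply: clarke_dd_le => e e0.
have et : 0 < e / t by rewrite divr_gt0.
have [d1 d10 Hd1] := clarke_dd_lt H et.
pose d := Num.min d1 (d1 / t).
have d0 : 0 < d by rewrite lt_min d10 divr_gt0.
have dd1 : d <= d1 by rewrite ge_min lexx.
have dt : d * t <= d1 by rewrite -ler_pdivlMr // ge_min lexx orbT.
exists d => // y l yx /andP[l0 ld].
have -> : diff_quot g y (t *: v) l = t * diff_quot g y v (t * l).
  by rewrite /diff_quot scalerA [l * t]mulrC; field; rewrite !gt_eqF.
have q : diff_quot g y v (t * l) < B + e / t.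
  by apply: Hd1; [exact: lt_le_trans yx dd1 | rewrite mulr_gt0 //=; nra].
have -> : t * B + e = t * (B + e / t) by field; rewrite gt_eqF.
by rewrite ltW // ltr_pM2l.
Qed.

Section ClarkeReal.
Variables (g : Y -> R) (x : Y).
Hypothesis hg : loc_lipschitz g.

Definition clarke_ddr v := fine (clarke_dd g x v).

Lemma clarke_ddrE v : clarke_dd g x v = (clarke_ddr v)%:E.
Proof.
by have [L _ /(_ v) [r Er _]] := clarke_dd_fin x hg; rewrite /clarke_ddr Er.
Qed.

Lemma clarke_ddr_bounded : exists L, forall v, `|clarke_ddr v| <= L * `|v|.
Proof.
have [L _ HL] := clarke_dd_fin x hg; exists L => v.
by have [r Er rL] := HL v; rewrite /clarke_ddr Er.
Qed.

Lemma clarke_ddrD v1 v2 : clarke_ddr (v1 + v2) <= clarke_ddr v1 + clarke_ddr v2.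
Proof. by rewrite -lee_fin -clarke_ddrE; apply: clarke_dd_subadd; rewrite clarke_ddrE. Qed.

Lemma clarke_ddrZ t v : 0 < t -> clarke_ddr (t *: v) = t * clarke_ddr v.
Proof.
have le t' v' : 0 < t' -> clarke_ddr (t' *: v') <= t' * clarke_ddr v'.
  by move=> t0; rewrite -lee_fin -clarke_ddrE; apply: clarke_dd_scale; rewrite ?clarke_ddrE.
move=> t0; apply/le_anti; rewrite le //=.
have := le t^-1 (t *: v); rewrite invr_gt0 scalerA mulVf ?gt_eqF // scale1r => /(_ t0).
by rewrite -(ler_pM2l t0) mulrA mulfV ?gt_eqF // mul1r.
Qed.

End ClarkeReal.
End ClarkeSublinear.

(** * The Hahn-Banach theorem *)

Section HahnBanach.
Context {R : realType} (X : lmodType R) (p : X -> R).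
Hypothesis p_subadd : forall x y, p (x + y) <= p x + p y.
Hypothesis p_homo : forall t x, 0 < t -> p (t *: x) = t * p x.

(* Partial linear functionals dominated by [p] are encoded by their graphs, which
   Zorn's lemma compares by inclusion. *)
Definition dominated_linear_graph (G : set (X * R)) :=
  [/\ G (0, 0),
      (forall a x r y s, G (x, r) -> G (y, s) -> G (a *: x + y, a * r + s)),
      (forall x r s, G (x, r) -> G (x, s) -> r = s) &
      (forall x r, G (x, r) -> r <= p x)].

Lemma sublinear0 : p 0 = 0.
Proof.
by have := p_homo 0 (ltr0n R 2); rewrite scaler0; lra.
Qed.

Section Extension.
Variable M : set (X * R).
Hypothesis hM : dominated_linear_graph M.

Lemma graph_scale a x r : M (x, r) -> M (a *: x, a * r).
Proof.
by case: hM => M0 Mc _ _ Mx; have := Mc a x r 0 0 Mx M0; rewrite !addr0.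
Qed.

Lemma graph_sub x r y s : M (x, r) -> M (y, s) -> M (x - y, r - s).
Proof.
case: hM => _ Mc _ _ Mx My; have := Mc (-1) y s x r My Mx.
by rewrite scaleN1r mulN1r addrC [- s + r]addrC.
Qed.

Lemma graph_extension_value x0 : exists c, forall y s, M (y, s) ->
  s - p (y - x0) <= c /\ c <= p (y + x0) - s.
Proof.
case: hM => M0 Mc _ Md.
pose lower := [set z | exists y s, M (y, s) /\ z = s - p (y - x0)].
have sep y s y' s' : M (y, s) -> M (y', s') -> s - p (y - x0) <= p (y' + x0) - s'.
  move=> My My'; have := Md _ _ (Mc 1 y s y' s' My My'); rewrite scale1r mul1r.
  have := p_subadd (y - x0) (y' + x0).
  rewrite [y - x0 + _]addrACA addNr addr0; lra.
have lower_ub : has_ubound lower by exists (p (0 + x0) - 0) => _ [y [s [My ->]]]; exact: sep.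
have lower_n0 : lower !=set0 by exists (0 - p (0 - x0)), 0, 0.
exists (sup lower) => y s My; split; first by apply: ub_le_sup => //; exists y, s.
by apply: ge_sup => // _ [y' [s' [My' ->]]]; exact: sep.
Qed.

Lemma graph_extension_dominated x0 c : (forall y s, M (y, s) ->
    s - p (y - x0) <= c /\ c <= p (y + x0) - s) ->
  forall x r t, M (x, r) -> r + t * c <= p (x + t *: x0).
Proof.
case: hM => _ _ _ Md hc x r t Mx.
have [t0|t0|->] := ltgtP t 0; last by rewrite scale0r mul0r !addr0; exact: Md.
- have u0 : 0 < - t by rewrite oppr_gt0.
  have [+ _] := hc _ _ (graph_scale (- t)^-1 Mx).
  have -> : x + t *: x0 = - t *: ((- t)^-1 *: x - x0).
    by rewrite scalerBr scalerA mulfV ?gt_eqF // scale1r scaleNr opprK.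
  rewrite p_homo // -(ler_pM2l u0) mulrBr mulrA mulfV ?gt_eqF // mul1r; lra.
- have [_] := hc _ _ (graph_scale t^-1 Mx).
  have -> : x + t *: x0 = t *: (t^-1 *: x + x0).
    by rewrite scalerDr scalerA mulfV ?gt_eqF // scale1r.
  rewrite p_homo // -(ler_pM2l t0) mulrBr mulrA mulfV ?gt_eqF // mul1r; lra.
Qed.

Lemma dominated_graph_extend x0 : ~ (exists r, M (x0, r)) ->
  exists M', [/\ dominated_linear_graph M', M `<=` M' & exists c, M' (x0, c)].
Proof.
move=> Mx0; have [c hc] := graph_extension_value x0.
have [M0 Mc Mf Md] := hM.
pose M' := [set z | exists x r t, M (x, r) /\ z = (x + t *: x0, r + t * c)].
exists M'; split; last first.
- by exists c, 0, 0, 1; rewrite scale1r mul1r !add0r.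
- by move=> [x r] Mx; exists x, r, 0; rewrite scale0r mul0r !addr0.
split.
- by exists 0, 0, 0; rewrite scale0r mul0r !addr0.
- move=> a _ _ _ _ [x1 [r1 [t1 [M1 [-> ->]]]]] [x2 [r2 [t2 [M2 [-> ->]]]]].
  exists (a *: x1 + x2), (a * r1 + r2), (a * t1 + t2); split; first exact: Mc.
  congr (_, _); last by ring.
  by rewrite !scalerDr scalerA scalerDl addrACA.
- move=> _ _ _ [x1 [r1 [t1 [M1 [-> ->]]]]] [x2 [r2 [t2 [M2 [e ->]]]]].
  have [t12|t12] := eqVneq t1 t2.
    by move: e; rewrite t12 => /addIr e; rewrite e in M1; rewrite (Mf _ _ _ M1 M2).
  exfalso; apply: Mx0; exists ((t1 - t2)^-1 * (r2 - r1)).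
  have -> : x0 = (t1 - t2)^-1 *: (x2 - x1).
    have <- : (t1 - t2) *: x0 = x2 - x1.
      by rewrite scalerBl -[x2](addrK (t2 *: x0)) -e [x1 + _]addrC addrAC addrK.
    by rewrite scalerA mulVf ?subr_eq0 // scale1r.
  exact/graph_scale/graph_sub.
- by move=> _ _ [x [r [t [Mx [-> ->]]]]]; exact: graph_extension_dominated.
Qed.
End Extension.

Lemma dominated_graph_chain (G0 : set (X * R)) (F : set (set (X * R))) :
  dominated_linear_graph G0 ->
  (forall G, F G -> dominated_linear_graph (G0 `|` G)) -> total_on F subset ->
  dominated_linear_graph (G0 `|` \bigcup_(G in F) G).
Proof.
move=> hG0 FG Ftot; set U := G0 `|` _.
have sub G : F G -> G0 `|` G `<=` U by move=> FG' z [?|?]; [left | right; exists G].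
have common a b : U a -> U b -> exists H, [/\ dominated_linear_graph H, H `<=` U, H a & H b].
  move=> [Ga|[i Fi ia]] [Gb|[j Fj jb]].
  - by exists G0; split => // z Gz; left.
  - by exists (G0 `|` j); split; [exact: FG | exact: sub | left | right].
  - by exists (G0 `|` i); split; [exact: FG | exact: sub | right | left].
  - have [ij|ji] := Ftot i j Fi Fj.
    + by exists (G0 `|` j); split; [exact: FG | exact: sub | right; exact: ij | right].
    + by exists (G0 `|` i); split; [exact: FG | exact: sub | right | right; exact: ji].
have [G00 _ _ _] := hG0; split; first by left.
- move=> a x r y s Ux Uy; have [H [[_ Hc _ _] HU Hx Hy]] := common _ _ Ux Uy.
  exact/HU/Hc.
- move=> x r s Ux Uy; have [H [[_ _ Hf _] _ Hx Hy]] := common _ _ Ux Uy.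
  exact: Hf Hx Hy.
- move=> x r Ux; have [H [[_ _ _ Hd] _ Hx _]] := common _ _ Ux Ux.
  exact: Hd.
Qed.

Lemma hahn_banach_graph (G0 : set (X * R)) : dominated_linear_graph G0 ->
  exists eta : X -> R, [/\ forall a x y, eta (a *: x + y) = a * eta x + eta y,
     forall x, eta x <= p x & forall x r, G0 (x, r) -> eta x = r].
Proof.
move=> hG0.
have [G [hG Gmax]] : exists G, dominated_linear_graph (G0 `|` G) /\
    forall G', G `<` G' -> ~ dominated_linear_graph (G0 `|` G').
  by apply: Zorn_bigcup => F FG Ftot; exact: dominated_graph_chain.
have total x : exists r, (G0 `|` G) (x, r).
  apply: contrapT => Gx; have [M [hM GM [c Mc]]] := dominated_graph_extend hG Gx.
  have G0M : G0 `|` M = M by apply/setUidPr => z G0z; apply: GM; left.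
  apply: (Gmax M); last by rewrite G0M.
  split; first by move=> z Gz; apply: GM; right.
  by move=> MG; apply: Gx; exists c; right; exact: MG.
pose eta x := xget 0 [set r | (G0 `|` G) (x, r)].
have Geta x : (G0 `|` G) (x, eta x) by exact: (xgetPex 0 (total x)).
have [_ Gc Gf Gd] := hG.
exists eta; split.
- by move=> a x y; apply: Gf (Geta _) (Gc _ _ _ _ _ (Geta x) (Geta y)).
- by move=> x; apply: Gd (Geta x).
- by move=> x r G0x; apply: Gf (Geta x) _; left.
Qed.

Lemma hahn_banach_factor (V : lmodType R) (gamma : V -> X) (zeta : V -> R) :
  (forall a u1 u2, gamma (a *: u1 + u2) = a *: gamma u1 + gamma u2) ->
  (forall a u1 u2, zeta (a *: u1 + u2) = a * zeta u1 + zeta u2) ->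
  (forall u, zeta u <= p (gamma u)) ->
  exists eta : X -> R, [/\ forall a x y, eta (a *: x + y) = a * eta x + eta y,
     forall x, eta x <= p x & forall u, zeta u = eta (gamma u)].
Proof.
move=> hg hz zp.
pose gl : {linear V -> X} := HB.pack gamma (GRing.isLinear.Build R V X *:%R gamma hg).
pose zl : {linear V -> R^o} := HB.pack zeta (GRing.isLinear.Build R V R^o *:%R zeta hz).
have gamma0 : gamma 0 = 0 := linear0 gl.
have zeta0 : zeta 0 = 0 := linear0 zl.
have gammaB u1 u2 : gamma (u1 - u2) = gamma u1 - gamma u2 := linearB gl u1 u2.
have zetaB u1 u2 : zeta (u1 - u2) = zeta u1 - zeta u2 := linearB zl u1 u2.
pose G0 := [set (gamma u, zeta u) | u in setT].
have hG0 : dominated_linear_graph G0.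
  split.
  - by exists 0 => //; rewrite gamma0 zeta0.
  - move=> a _ _ _ _ [u1 _ [<- <-]] [u2 _ [<- <-]]; exists (a *: u1 + u2) => //.
    by rewrite hg hz.
  - move=> _ r s [u1 _ [<- <-]] [u2 _ [e <-]].
    have := zp (u1 - u2); have := zp (u2 - u1).
    rewrite !gammaB !zetaB e subrr sublinear0; lra.
  - by move=> _ _ [u _ [<- <-]].
have [eta [eta_lin eta_p eta_G0]] := hahn_banach_graph hG0.
by exists eta; split => // u; rewrite (eta_G0 _ _ (ex_intro2 _ _ u I erefl)).
Qed.
End HahnBanach.

(** * Locally Lipschitz functions *)

Section LocLipschitz.
Context {R : realType}.
Implicit Types Y Z : normedModType R.

Lemma loc_lipschitzD Y (g h : Y -> R) : loc_lipschitz g -> loc_lipschitz h ->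
  loc_lipschitz (fun y => g y + h y).
Proof.
move=> hg hh x; have [r1 r10 [L1 HL1]] := hg x; have [r2 r20 [L2 HL2]] := hh x.
exists (Num.min r1 r2); first by rewrite lt_min r10 r20.
exists (L1 + L2) => y z; rewrite !lt_min => /andP[y1 y2] /andP[z1 z2].
rewrite opprD addrACA mulrDl (le_trans (ler_normD _ _)) //.
exact: lerD (HL1 _ _ y1 z1) (HL2 _ _ y2 z2).
Qed.

Lemma loc_lipschitz_continuous Y (g : Y -> R) : loc_lipschitz g -> continuous g.
Proof.
move=> hg x; apply/cvgrPdist_lt => e e0; apply/nbhs_normP.
have [r r0 [L HL]] := hg x; have L1 : 0 < `|L| + 1 by rewrite ltr_wpDl.
exists (Num.min r (e / (`|L| + 1))); first by rewrite /= lt_min r0 divr_gt0.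
move=> y /=; rewrite lt_min distrC => /andP[yr ye].
apply: le_lt_trans (HL x y _ _) _; rewrite ?subrr ?normr0 //.
have : L * `|x - y| <= `|L| * `|x - y| by apply: ler_wpM2r => //; exact: ler_norm.
have : (`|L| + 1) * `|x - y| < e by rewrite mulrC -ltr_pdivlMr // distrC.
have := normr_ge0 (x - y); nra.
Qed.

Lemma loc_lipschitz_comp_linear Y Z (g : Z -> R) (gamma : Y -> Z) :
  is_linear gamma -> continuous gamma -> loc_lipschitz g ->
  loc_lipschitz (fun y => g (gamma y)).
Proof.
move=> hgam cgam hg x; have [B B0 gB] := is_linear_bounded hgam cgam.
have [r r0 [L HL]] := hg (gamma x).
have near_x y : `|y - x| < r / B -> `|gamma y - gamma x| < r.
  by rewrite -is_linearB // ltr_pdivlMr // mulrC => /(le_lt_trans (gB _)).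
exists (r / B); first by rewrite divr_gt0.
exists (`|L| * B) => y z yx zx.
apply: le_trans (HL _ _ (near_x _ yx) (near_x _ zx)) _.
rewrite -is_linearB // -mulrA (le_trans (ler_wpM2r _ (ler_norm L))) //.
by rewrite ler_wpM2l.
Qed.

Lemma continuous_line Y (v d : Y) : continuous (fun s : R => v + s *: d).
Proof.
by move=> s; apply: cvgD; [exact: cvg_cst | apply: cvgZ; [exact: cvg_id | exact: cvg_cst]].
Qed.

End LocLipschitz.

Section BumpExtrema.
Context {R : realType}.

Lemma bump_min_max (phi : R -> R) t : continuous phi -> 0 < t < 1 ->
  phi 0 = 0 -> phi 1 = 0 -> 0 <= phi t ->
  exists a c, [/\ 0 <= a < c, c < 1,
    (forall s, a <= s <= c -> phi a <= phi s) &
    (forall s, c <= s <= 1 -> phi s <= phi c)].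
Proof.
move=> cphi /andP[t0 t1] phi0 phi1 phit.
have [c /andP[c0 c1] cmax] : exists2 c, 0 < c < 1 &
    forall s, 0 <= s <= 1 -> phi s <= phi c.
  have [c c01 cmax] := EVT_max (@ler01 R) (continuous_subspaceT cphi).
  have {}cmax s : 0 <= s <= 1 -> phi s <= phi c by move=> s01; apply: cmax; rewrite in_itv.
  move: c01; rewrite in_itv /= => /andP[c0 c1].
  have [c_int|c_end] := boolP ((0 < c) && (c < 1)); first by exists c.
  have phic : phi c = 0.
    move: c_end; rewrite negb_and -!leNgt => /orP[c0'|c1'].
      by rewrite (@le_anti _ _ c 0) ?c0 ?c0'.
    by rewrite (@le_anti _ _ c 1) ?c1 ?c1'.
  exists t; first by rewrite t0 t1.
  by move=> s s01; rewrite (le_trans (cmax s s01)) // phic.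
have [a /andP[a0 ac] amin] : exists2 a, 0 <= a < c &
    forall s, 0 <= s <= c -> phi a <= phi s.
  have [a a0c amin] := EVT_min (ltW c0) (continuous_subspaceT cphi).
  have {}amin s : 0 <= s <= c -> phi a <= phi s by move=> s0c; apply: amin; rewrite in_itv.
  move: a0c; rewrite in_itv /= => /andP[a0 ac].
  have [a_lt|a_ge] := ltP a c; first by exists a; rewrite ?a0.
  have ea : a = c by apply/le_anti; rewrite ac.
  rewrite ea in amin.
  exists 0; rewrite ?lexx ?c0 // => s s0c.
  by apply: le_trans (amin s s0c); apply: cmax; rewrite lexx ler01.
exists a, c; split; rewrite ?a0 ?ac //.
- by move=> s /andP[a_s sc]; apply: amin; rewrite sc (le_trans a0).
- by move=> s /andP[cs s1]; apply: cmax; rewrite s1 (le_trans (ltW c0)).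
Qed.

End BumpExtrema.

Section Lagrangian.
Context {R : realType} (V X : normedModType R).
Variables (gamma : V -> X) (A : V -> V -> R) (J : X -> X -> R) (f : V -> R).
Hypothesis hg : is_linear gamma.
Hypothesis cg : continuous gamma.
Hypothesis hf : dual_elt f.
Hypothesis hA : forall u, dual_elt (A u).
Hypothesis hA_bounded : exists C : R, forall u, dual_norm (A u) <= C * `|u|.
Hypothesis hA_sym : forall u v, A u v = A v u.
Hypothesis hJ : forall w, loc_lipschitz (J w).

Local Notation Lag := (Lag_fun A f gamma J).

Lemma A_bilinear_bounded : exists2 C, 0 <= C & forall u v, `|A u v| <= C * `|u| * `|v|.
Proof.
have [C HC] := hA_bounded; exists `|C| => // u v.
apply: le_trans (dual_norm_le (hA u) v) _; rewrite ler_wpM2r //.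
by apply: le_trans (HC u) _; rewrite ler_wpM2r // ler_norm.
Qed.

Lemma A_sqr_shift y u l :
  A (y + l *: u) (y + l *: u) = A y y + 2 * l * A y u + l ^+ 2 * A u u.
Proof.
rewrite (dual_eltD (hA _)) (dual_eltZ (hA _)).
rewrite (hA_sym _ y) (hA_sym _ u) !(dual_eltD (hA _)) !(dual_eltZ (hA _)) (hA_sym u y).
ring.
Qed.

Lemma Lag_fun_shift w y u l : Lag w (y + l *: u) - Lag w y =
  l * (A y u - f u) + l ^+ 2 / 2 * A u u +
  (J (gamma w) (gamma y + l *: gamma u) - J (gamma w) (gamma y)).
Proof.
rewrite /Lag_fun A_sqr_shift (dual_eltD hf) (dual_eltZ hf) (is_linearD hg) (is_linearZ hg).
by field.
Qed.

Lemma quadratic_loc_lipschitz : loc_lipschitz (fun v => 2^-1 * A v v - f v).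
Proof.
move=> x; have [C C0 HC] := A_bilinear_bounded; have [B B0 HB] := dual_elt_bounded hf.
exists 1 => //; exists (C * (`|x| + 1) + B) => y z yx zx.
have -> : 2^-1 * A y y - f y - (2^-1 * A z z - f z) = 2^-1 * A (y + z) (y - z) - f (y - z).
  rewrite (dual_eltB hf) (dual_eltB (hA _)) (hA_sym _ y) (hA_sym _ z).
  by rewrite !(dual_eltD (hA _)) (hA_sym y z); ring.
have yz : `|y + z| <= 2 * (`|x| + 1).
  have := ler_normD (y - x) (z - x); have := ler_normD (y - x) x.
  have := ler_normD (z - x) x; rewrite !subrK.
  have := ler_normD y z; lra.
have Ayz := ler_wpM2r (normr_ge0 (y - z)) (ler_wpM2l C0 yz).
apply: le_trans (ler_normB _ _) _.
rewrite normrM ger0_norm ?invr_ge0 ?ler0n //.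
have := HC (y + z) (y - z); have := HB (y - z); nra.
Qed.

Lemma Lag_fun_loc_lipschitz w : loc_lipschitz (Lag w).
Proof.
apply: (loc_lipschitzD quadratic_loc_lipschitz).
exact: loc_lipschitz_comp_linear hg cg (hJ (gamma w)).
Qed.

Lemma Lag_fun_diff_quot w y u l : l != 0 -> diff_quot (Lag w) y u l =
  A y u - f u + l / 2 * A u u + diff_quot (J (gamma w)) (gamma y) (gamma u) l.
Proof. by move=> l0; rewrite /diff_quot Lag_fun_shift; field. Qed.

Lemma Lag_fun_clarke_dd_le w v u : (clarke_dd (Lag w) v u <=
  (A v u - f u + clarke_ddr (J (gamma w)) (gamma v) (gamma u))%:E)%E.
Proof.
set p := clarke_ddr _ _ _; apply: clarke_dd_le => e e0.
have Jp : (clarke_dd (J (gamma w)) (gamma v) (gamma u) <= p%:E)%E.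
  by rewrite clarke_ddrE.
have [d d0 Hd] := clarke_dd_lt Jp (divr_gt0 e0 (ltr0n R 2)).
have [B B0 HB] := is_linear_bounded hg cg.
have [C C0 HC] := A_bilinear_bounded.
set Cu := 4 * (C * `|u| + 1); set Au := 4 * (`|A u u| + 1).
have Cu0 : 0 < Cu by rewrite mulr_gt0 // ltr_wpDl // mulr_ge0.
have Au0 : 0 < Au by rewrite mulr_gt0 // ltr_wpDl.
pose m := Num.min (Num.min d (d / B)) (Num.min (e / Cu) (e / Au)).
have m0 : 0 < m by rewrite !lt_min d0 !divr_gt0.
have [md mdB meC meA] : [/\ m <= d, m <= d / B, m <= e / Cu & m <= e / Au].
  by split; rewrite !ge_min lexx ?orbT.
exists m => // y l yv /andP[l0 lm]; rewrite Lag_fun_diff_quot ?gt_eqF //.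
have q1 : diff_quot (J (gamma w)) (gamma y) (gamma u) l < p + e / 2.
  apply: Hd; last by rewrite l0 (lt_le_trans lm md).
  rewrite -is_linearB // (le_lt_trans (HB _)) // mulrC -ltr_pdivlMr //.
  exact: lt_le_trans yv mdB.
have q2 : A y u - A v u <= e / 4.
  rewrite hA_sym (hA_sym v) -(dual_eltB (hA u)) (le_trans (ler_norm _)) //.
  apply: le_trans (HC _ _) _; move: meC; rewrite ler_pdivlMr // /Cu => meC.
  have := mulr_ge0 C0 (normr_ge0 u); have := ltW yv; nra.
have q3 : l / 2 * A u u <= e / 4.
  move: meA; rewrite ler_pdivlMr // /Au => meA.
  have := ler_norm (A u u); have := normr_ge0 (A u u); nra.
lra.
Qed.

Lemma Lag_fun_subdiff w v xi : clarke_subdiff (Lag w) v xi ->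
  exists2 eta, clarke_subdiff (J (gamma w)) (gamma v) eta &
    forall u, xi u = A v u - f u + eta (gamma u).
Proof.
case=> hxi xi_le; have hJw := hJ (gamma w).
pose zeta u := xi u - A v u + f u.
have zeta_lin a u1 u2 : zeta (a *: u1 + u2) = a * zeta u1 + zeta u2.
  by rewrite /zeta hxi.1 (hA v).1 hf.1; ring.
have zeta_le u : zeta u <= clarke_ddr (J (gamma w)) (gamma v) (gamma u).
  by have := le_trans (xi_le u) (Lag_fun_clarke_dd_le w v u); rewrite lee_fin /zeta; lra.
have [eta [eta_lin eta_le eta_zeta]] :=
  hahn_banach_factor (clarke_ddrD (gamma v) hJw) (clarke_ddrZ (gamma v) hJw)
    hg zeta_lin zeta_le.
have [L pL] := clarke_ddr_bounded (gamma v) hJw.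
have eta_linear : is_linear (eta : X -> R^o) := eta_lin.
have eta_bounded z : `|eta z| <= L * `|z|.
  have := eta_le z; have := eta_le (- z); have := pL z; have := pL (- z).
  rewrite (is_linearN eta_linear) normrN !ler_norml; lra.
exists eta; last by move=> u; rewrite -eta_zeta /zeta; ring.
split; last by move=> z; rewrite clarke_ddrE // lee_fin.
split; first exact: eta_lin.
exact: (is_linear_dominated_continuous eta_linear eta_bounded).
Qed.

Variable m_alpha : R.
Hypothesis hJ_relaxed : forall w v1 v2 : X,
  (clarke_dd (J w) v1 (v2 - v1)%R + clarke_dd (J w) v2 (v1 - v2)%R
     <= (m_alpha * `|v1 - v2| ^+ 2)%:E)%E.
Hypothesis hA_gap : forall u, u != 0 -> m_alpha * `|gamma u| ^+ 2 < A u u.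

Section Line.
Variables (w v d : V) (b k : R).

(* [dev] is the deviation of [Lag w] along the line [x] from an affine function, and
   [slope s] is the derivative at [s] of its smooth part. *)
Let x s := v + s *: d.
Let dev s := Lag w (x s) - (s * b + k).
Let slope s := A (x s) d - f d - b.

Lemma chord_dev_shift s l : dev (s + l) - dev s = l * slope s + l ^+ 2 / 2 * A d d +
  (J (gamma w) (gamma (x s) + l *: gamma d) - J (gamma w) (gamma (x s))).
Proof.
have -> : dev (s + l) = Lag w (x s + l *: d) - ((s + l) * b + k).
  by rewrite /dev /x scalerDl addrA.
by have := Lag_fun_shift w (x s) d l; rewrite /dev /slope; lra.
Qed.

Lemma chord_slope_shift a c : slope c - slope a = (c - a) * A d d.
Proof.
have : A d (x c) - A d (x a) = (c - a) * A d d.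
  by rewrite -(dual_eltB (hA d)) /x opprD addrACA subrr add0r -scalerBl (dual_eltZ (hA d)).
by rewrite /slope (hA_sym (x c)) (hA_sym (x a)); lra.
Qed.

Lemma clarke_dd_ge_at_dev_min a D delta : 0 < D -> 0 < delta ->
  (forall l, 0 < l < delta -> dev a <= dev (a + l * D)) ->
  ((- (D * slope a))%:E <= clarke_dd (J (gamma w)) (gamma (x a)) (D *: gamma d))%E.
Proof.
move=> D0 delta0 amin.
apply: (clarke_dd_ge_right (K := D ^+ 2 / 2 * A d d) delta0) => l l_delta.
have := amin l l_delta; have := chord_dev_shift a (l * D); case/andP: l_delta => l0 _.
rewrite /diff_quot scalerA ler_pdivlMr // exprMn; nra.
Qed.

Lemma clarke_dd_ge_at_dev_max c D delta : 0 < D -> 0 < delta ->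
  (forall l, 0 < l < delta -> dev (c + l * D) <= dev c) ->
  ((D * slope c)%:E <= clarke_dd (J (gamma w)) (gamma (x c)) (- (D *: gamma d))%R)%E.
Proof.
move=> D0 delta0 cmax.
apply: (clarke_dd_ge_left (K := - (D ^+ 2 / 2 * A d d)) delta0) => l l_delta.
have := cmax l l_delta; have := chord_dev_shift c (l * D); case/andP: l_delta => l0 _.
rewrite scalerN opprK scalerA ler_pdivlMr // exprMn; nra.
Qed.

Lemma chord_dev_min_max_absurd a c : d != 0 -> a < c -> c < 1 ->
  (forall s, a <= s <= c -> dev a <= dev s) ->
  (forall s, c <= s <= 1 -> dev s <= dev c) -> False.
Proof.
move=> d0 ac c1 amin cmax; pose D := c - a; have D0 : 0 < D by rewrite subr_gt0.
have lower_a : ((- (D * slope a))%:E <=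
    clarke_dd (J (gamma w)) (gamma (x a)) (D *: gamma d))%E.
  apply: (clarke_dd_ge_at_dev_min D0 ltr01) => l /andP[l0 l1].
  by apply: amin; rewrite lerDl mulr_ge0 ?ltW //= /D; nra.
have delta0 : 0 < (1 - c) / D by rewrite divr_gt0 // subr_gt0.
have lower_c : ((D * slope c)%:E <=
    clarke_dd (J (gamma w)) (gamma (x c)) (- (D *: gamma d))%R)%E.
  apply: (clarke_dd_ge_at_dev_max D0 delta0) => l /andP[l0].
  by rewrite ltr_pdivlMr // => l1; apply: cmax; rewrite lerDl mulr_ge0 ?ltW //=; lra.
have step : gamma (x c) - gamma (x a) = D *: gamma d.
  by rewrite -(is_linearB hg) /x opprD addrACA subrr add0r -scalerBl (is_linearZ hg).
have := hJ_relaxed (gamma w) (gamma (x a)) (gamma (x c)).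
rewrite step -opprB step normrN normrZ gtr0_norm // => relaxed.
have := le_trans (leeD lower_a lower_c) relaxed; rewrite -EFinD lee_fin.
have := chord_slope_shift a c; rewrite -/D.
have : 0 < D ^+ 2 * (A d d - m_alpha * `|gamma d| ^+ 2).
  by rewrite mulr_gt0 ?exprn_gt0 // subr_gt0 hA_gap.
rewrite exprMn; nra.
Qed.

End Line.

Lemma Lag_fun_strictly_convex w : strictly_convex (Lag w).
Proof.
move=> u v t uv /andP[t0 t1].
set d := u - v; have d0 : d != 0 by rewrite subr_eq0; exact/eqP.
pose x s := v + s *: d; pose h s := Lag w (x s).
have -> : t *: u + (1 - t) *: v = x t.
  by rewrite /x /d scalerBl scale1r scalerBr addrCA addrC.
have -> : Lag w u = h 1 by rewrite /h /x scale1r /d addrC subrK.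
have -> : Lag w v = h 0 by rewrite /h /x scale0r addr0.
rewrite -/(h t) ltNge; apply/negP => chord_le.
pose phi s := h s - (s * (h 1 - h 0) + h 0).
have phi_cont : continuous phi.
  move=> s; apply: cvgB.
    apply: (@continuous_comp _ _ _ x (Lag w)); first exact: continuous_line.
    exact: loc_lipschitz_continuous (Lag_fun_loc_lipschitz w) _.
  by apply: cvgD; [apply: cvgM; [exact: cvg_id | exact: cvg_cst] | exact: cvg_cst].
have [a [c [/andP[_ ac] c1 amin cmax]]] : exists a c : R, [/\ 0 <= a < c, c < 1,
    (forall s, a <= s <= c -> phi a <= phi s) &
    (forall s, c <= s <= 1 -> phi s <= phi c)].
  have t01 : 0 < t < 1 by rewrite t0 t1.
  by apply: (bump_min_max phi_cont t01); rewrite /phi; lra.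
exact: chord_dev_min_max_absurd d0 ac c1 amin cmax.
Qed.

End Lagrangian.

Unset Implicit Arguments.

Theorem lemma2 (R : realType) (V X : completeNormedModType R)
  (gamma : V -> X) (A : V -> V -> R) (J : X -> X -> R) (f : V -> R)
  (m_A c0 c1 c2 m_alpha m_L : R) :
  reflexive_space V ->
  (* gamma in L(V,X) *)
  is_linear gamma -> continuous gamma ->
  (* f in V^* *)
  dual_elt f ->
  (* (A1) A : V -> V^* linear and bounded *)
  (forall u, dual_elt (A u)) ->
  (forall (a : R) (u1 u2 v : V), A (a *: u1 + u2) v = a * A u1 v + A u2 v) ->
  (exists C : R, forall u, dual_norm (A u) <= C * `|u|) ->
  (* (A2) *)
  (forall u v, A u v = A v u) ->
  (* (A3) *)
  0 < m_A -> (forall u, A u u >= m_A * `|u| ^+ 2) ->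
  (* (J1) *)
  (forall w, loc_lipschitz (J w)) ->
  (* (J2) *)
  0 <= c0 -> 0 <= c1 -> 0 <= c2 ->
  (forall w v xi, clarke_subdiff (J w) v xi ->
     dual_norm xi <= c0 + c1 * `|v| + c2 * `|w|) ->
  (* (J3) *)
  0 <= m_alpha -> 0 <= m_L ->
  (forall w1 w2 v1 v2 : X,
     (clarke_dd (J w1) v1 (v2 - v1)%R + clarke_dd (J w2) v2 (v1 - v2)%R
      <= (m_alpha * `|v1 - v2| ^+ 2 + m_L * `|w1 - w2| * `|v1 - v2|)%R%:E)%E) ->
  (* (S) *)
  m_A > (m_alpha + m_L) * op_norm gamma ^+ 2 ->
  (* (i) *)
  (forall w, loc_lipschitz (Lag_fun A f gamma J w)) /\
  (* (ii) *)
  (forall w v xi, clarke_subdiff (Lag_fun A f gamma J w) v xi ->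
     exists2 eta, clarke_subdiff (J (gamma w)) (gamma v) eta &
       forall u, xi u = A v u - f u + eta (gamma u)) /\
  (* (iii) *)
  (forall w, strictly_convex (Lag_fun A f gamma J w)).
Proof.
move=> _ hg cg hf hA _ hA_bounded hA_sym _ hA_coercive hJ _ _ _ _ hm_alpha hm_L hJ3 hS.
have hJ_relaxed w v1 v2 : (clarke_dd (J w) v1 (v2 - v1)%R + clarke_dd (J w) v2 (v1 - v2)%R
    <= (m_alpha * `|v1 - v2| ^+ 2)%:E)%E.
  by have := hJ3 w w v1 v2; rewrite subrr normr0 mulr0 mul0r addr0.
have hA_gap := coercive_gt_op_norm hg cg hA_coercive hm_alpha.
have {hA_gap} hA_gap : forall u, u != 0 -> m_alpha * `|gamma u| ^+ 2 < A u u.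
  apply: hA_gap; have := mulr_ge0 hm_L (exprn_ge0 2 (op_norm_ge0 hg cg)); lra.
split; [|split].
- exact: Lag_fun_loc_lipschitz.
- exact: Lag_fun_subdiff.
- exact: Lag_fun_strictly_convex.
Qed.
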